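(* Let $r\ge 1$ and let $H$ be a graph with at least one edge. The join of $rK_1$ and $H$ is well-bicovered if and only if $H$ is both well-covered and well-bicovered, and $b(H)=r+\alpha(H)$.
   Context: All graphs are finite and simple; ''subgraph'' means induced subgraph. $rK_1$ is the edgeless graph on $r$ vertices. $b(G)$ denotes the maximum order of an induced bipartite subgraph of $G$. A graph is well-bicovered if every vertex-inclusion-maximal induced bipartite subgraph has the same order. A graph is well-covered if every maximal independent set has the same cardinality, namely the independence number $\alpha$. The join of two graphs is their disjoint union together with all edges between them. *)

(* Simple graphs: symmetric irreflexive rel on a finType. *)
From mathcomp Require Import all_boot.
Set Implicit Arguments. Unset Strict Implicit. Unset Printing Implicit Defensive.

Section Graphs.
Variable T : finType.
Variable e : rel T.

Definition independent (A : {set T}) : bool :=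
  [forall x in A, forall y in A, ~~ e x y].

Definition bipartite_set (S : {set T}) : bool :=
  [exists A : {set T}, (A \subset S) && independent A && independent (S :\: A)].

Definition maximal_independent (A : {set T}) : Prop :=
  independent A /\ forall v, v \notin A -> ~~ independent (v |: A).

Definition maximal_bipartite (S : {set T}) : Prop :=
  bipartite_set S /\ forall v, v \notin S -> ~~ bipartite_set (v |: S).

Definition alpha : nat := \max_(A : {set T} | independent A) #|A|.
Definition bip_number : nat := \max_(S : {set T} | bipartite_set S) #|S|.

Definition well_covered : Prop :=
  forall A B, maximal_independent A -> maximal_independent B -> #|A| = #|B|.

Definition well_bicovered : Prop :=
  forall S1 S2, maximal_bipartite S1 -> maximal_bipartite S2 -> #|S1| = #|S2|.
End Graphs.

Definition join_rel (T1 T2 : finType) (e1 : rel T1) (e2 : rel T2) : rel (T1 + T2) :=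
  fun x y => match x, y with
             | inl a, inl b => e1 a b
             | inr a, inr b => e2 a b
             | _, _ => true
             end.

Definition edgeless (r : nat) : rel 'I_r := fun _ _ => false.
Arguments edgeless r : clear implicits.

(* A maximal bipartite set of the join either avoids the r independent
   vertices, and is then a maximal bipartite set of H (never independent,
   since H has an edge), or contains one of them; as such a vertex is
   adjacent to all of H, the H-part is then independent, and maximality
   forces the set to be all of rK_1 together with a maximal independent set
   of H.  So the orders of the maximal bipartite sets of the join are exactly
   the |B| for B maximal bipartite in H and the r + |A| for A maximal
   independent in H, and these all agree iff H is well-bicovered and
   well-covered with b(H) = r + alpha(H). *)

From mathcomp Require Import all_boot.
Set Implicit Arguments. Unset Strict Implicit. Unset Printing Implicit Defensive.

Section MaximalSets.
Variables (T : finType) (P : pred {set T}).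

(* [maximal_independent e] and [maximal_bipartite e] unfold to
   [maximal (independent e)] and [maximal (bipartite_set e)]. *)
Definition maximal (M : {set T}) : Prop :=
  P M /\ forall v, v \notin M -> ~~ P (v |: M).

Lemma exists_maximal_max X0 :
  P X0 -> exists2 M, maximal M & #|M| = \max_(B | P B) #|B|.
Proof.
move=> PX0; have : 0 < #|P| by apply/card_gt0P; exists X0.
case/(eq_bigmax_cond (fun B : {set T} => #|B|)) => M PM maxM.
exists M => //; split=> // v vM; apply/negP => Pv.
have := @leq_bigmax_cond _ P (fun B : {set T} => #|B|) _ Pv.
by rewrite maxM cardsU1 vM ltnn.
Qed.

Lemma equimaximal_card X0 : P X0 ->
  (forall A B, maximal A -> maximal B -> #|A| = #|B|) ->
  forall M, maximal M -> #|M| = \max_(B | P B) #|B|.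
Proof.
move=> PX0 equi M maxM; have [N maxN <-] := exists_maximal_max PX0.
exact: equi.
Qed.
End MaximalSets.

Section IndependentBipartite.
Variables (T : finType) (e : rel T).

Lemma independentP (A : {set T}) :
  reflect (forall x y, x \in A -> y \in A -> ~~ e x y) (independent e A).
Proof.
apply: (iffP forall_inP) => [indA x y xA | indA x xA].
  by move/forall_inP: (indA x xA); apply.
by apply/forall_inP => y; apply: indA.
Qed.

Lemma independent0 : independent e set0.
Proof. by apply/independentP => x y; rewrite inE. Qed.

Lemma bipartite0 : bipartite_set e set0.
Proof. by apply/existsP; exists set0; rewrite subxx setD0 independent0. Qed.

Lemma bipartite_setU1 v (B : {set T}) :
  irreflexive e -> independent e B -> bipartite_set e (v |: B).
Proof.
move=> e_irr indB; apply/existsP; exists B; rewrite subsetUr indB /=.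
have onlyv a : a \in (v |: B) :\: B -> a = v.
  by rewrite !inE => /andP[/negPf aB]; rewrite aB orbF => /eqP.
by apply/independentP => a b /onlyv -> /onlyv ->; rewrite e_irr.
Qed.

Lemma maximal_bipartite_not_independent x y (B : {set T}) :
  irreflexive e -> e x y -> maximal_bipartite e B -> ~~ independent e B.
Proof.
move=> e_irr exy [_ maxB]; apply/negP => indB.
have inB v : v \in B.
  by apply: contraT => /maxB; rewrite bipartite_setU1.
by move/independentP: indB => /(_ x y (inB x) (inB y)); rewrite exy.
Qed.
End IndependentBipartite.

Section Join.
Variables (r : nat) (T : finType) (e : rel T).
Local Notation eG := (join_rel (edgeless r) e).

Definition join_set (K : {set 'I_r}) (B : {set T}) : {set 'I_r + T} :=
  [set x | match x with inl k => k \in K | inr t => t \in B end].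

Lemma join_set_preim (S : {set 'I_r + T}) :
  join_set (inl @^-1: S) (inr @^-1: S) = S.
Proof. by apply/setP => -[k|t]; rewrite !inE. Qed.

Lemma card_join_set K B : #|join_set K B| = #|K| + #|B|.
Proof.
rewrite -!sum1_card big_sumType.
by congr (_ + _); apply: eq_bigl => x; rewrite inE.
Qed.

Lemma join_setS K1 B1 K B :
  (join_set K1 B1 \subset join_set K B) = (K1 \subset K) && (B1 \subset B).
Proof.
apply/subsetP/andP => [sub | [/subsetP sK /subsetP sB] [k|t]]; rewrite ?inE.
  by split; apply/subsetP => z zin;
    [move: (sub (inl z)) | move: (sub (inr z))]; rewrite !inE; apply.
exact: sK.
exact: sB.
Qed.

Lemma join_setD K1 B1 K B :
  join_set K B :\: join_set K1 B1 = join_set (K :\: K1) (B :\: B1).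
Proof. by apply/setP => -[k|t]; rewrite !inE. Qed.

Lemma join_setU1l k K B : inl k |: join_set K B = join_set (k |: K) B.
Proof. by apply/setP => -[k'|t]; rewrite !inE. Qed.

Lemma join_setU1r t K B : inr t |: join_set K B = join_set K (t |: B).
Proof. by apply/setP => -[k|t']; rewrite !inE. Qed.

Lemma independent_join_set K B :
  independent eG (join_set K B) = independent e B && ((K == set0) || (B == set0)).
Proof.
apply/independentP/andP => [indS | [/independentP indB KB0]].
  split.
    by apply/independentP => x y xB yB; apply: (indS (inr x) (inr y)); rewrite inE.
  apply: contraT; rewrite negb_or => /andP[/set0Pn[k kK] /set0Pn[t tB]].
  by have := indS (inl k) (inr t); rewrite !inE kK tB => /(_ isT isT).
move=> [k|t] [k'|t']; rewrite !inE // => xS yS; last exact: indB.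
all: by case/orP: KB0 => /eqP KB0; rewrite KB0 inE in xS yS.
Qed.

Lemma bipartite_join_set K B :
  bipartite_set eG (join_set K B) =
  if K == set0 then bipartite_set e B else independent e B.
Proof.
apply/existsP/idP => [[A] | ].
  rewrite -(join_set_preim A) join_setS join_setD !independent_join_set.
  move: (inl @^-1: A) (inr @^-1: A) => K1 B1.
  case/andP => /andP[/andP[_ sB1] /andP[indB1 KB1]] /andP[indB2 KB2].
  case: eqP => [_ | /eqP/set0Pn[k kK]].
    by apply/existsP; exists B1; rewrite sB1 indB1.
  have [kK1 | kK1] := boolP (k \in K1).
    have K1n0 : K1 != set0 by apply/set0Pn; exists k.
    by move: KB1; rewrite (negPf K1n0) => /eqP B10; rewrite B10 setD0 in indB2.
  have KK1n0 : K :\: K1 != set0 by apply/set0Pn; exists k; rewrite inE kK1.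
  move: KB2; rewrite (negPf KK1n0) setD_eq0 /= => sBB1.
  suff -> : B = B1 by [].
  by apply/eqP; rewrite eqEsubset sBB1.
case: ifP => [/eqP -> /existsP[B1 /andP[/andP[sB1 indB1] indB2]] | _ indB].
  exists (join_set set0 B1).
  by rewrite join_setS join_setD !independent_join_set setD0 eqxx sub0set sB1 indB1 indB2.
exists (join_set K set0).
by rewrite join_setS join_setD !independent_join_set setDv setD0 !eqxx subxx sub0set
  independent0 indB !orbT.
Qed.

Lemma maximal_bipartite_join_setE K B :
  maximal_bipartite eG (join_set K B) <->
  [/\ if K == set0 then bipartite_set e B else independent e B,
      forall k, k \notin K -> ~~ independent e B &
      forall t, t \notin B ->
        ~~ if K == set0 then bipartite_set e (t |: B) else independent e (t |: B)].
Proof.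
have U1n0 k : (k |: K == set0) = false.
  by apply/negP => /set0Pn; apply; exists k; rewrite !inE eqxx.
split=> [[bipS maxS] | [bipS maxK maxB]].
  split=> [|k kK|t tB]; first by rewrite -bipartite_join_set.
    by have := maxS (inl k); rewrite inE join_setU1l bipartite_join_set U1n0; apply.
  by have := maxS (inr t); rewrite inE join_setU1r bipartite_join_set; apply.
split=> [|[k|t]]; rewrite ?bipartite_join_set // inE => vS.
  by rewrite join_setU1l bipartite_join_set U1n0; apply: maxK vS.
by rewrite join_setU1r bipartite_join_set; apply: maxB.
Qed.

Lemma maximal_bipartite_join x y :
  0 < r -> irreflexive e -> e x y -> forall K B,
  maximal_bipartite eG (join_set K B) <->
  (K = set0 /\ maximal_bipartite e B) \/ (K = setT /\ maximal_independent e B).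
Proof.
move=> r_gt0 e_irr exy K B; apply: iff_trans (maximal_bipartite_join_setE K B) _.
case: eqP => [-> | /eqP Kn0].
  split=> [[bipB _ maxB] | [[_ [bipB maxB]] | [T0 _]]]; first by left.
    by split=> // k _; apply: maximal_bipartite_not_independent exy _.
  by move/setP/(_ (Ordinal r_gt0)): T0; rewrite !inE.
split=> [[indB maxK maxB] | [[K0 _] | [KT [indB maxB]]]].
- right; split=> //; apply/setP => k; rewrite inE.
  by apply: contraT => /maxK; rewrite indB.
- by rewrite K0 eqxx in Kn0.
- by split=> // k; rewrite KT inE.
Qed.
End Join.

Theorem mainTheorem3 (r : nat) (T : finType) (e : rel T) :
  1 <= r -> symmetric e -> irreflexive e -> (exists x y, e x y) ->
  (well_bicovered (join_rel (edgeless r) e) <->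
   well_covered e /\ well_bicovered e /\ bip_number e = r + alpha e).
Proof.
move=> r_gt0 _ e_irr [x [y exy]].
have maxJ := maximal_bipartite_join r_gt0 e_irr exy.
split=> [WBG | [WC [WB bE]] S1 S2].
- have [B0 maxB0 _] := exists_maximal_max (bipartite0 e).
  have cardB B : maximal_bipartite e B -> #|B| = #|B0|.
    move=> maxB; have := WBG (join_set set0 B) (join_set set0 B0).
    by rewrite !card_join_set cards0; apply; apply/maxJ; left.
  have cardA A : maximal_independent e A -> r + #|A| = #|B0|.
    move=> maxA; have := WBG (join_set setT A) (join_set set0 B0).
    by rewrite !card_join_set cardsT card_ord cards0; apply; apply/maxJ; [right | left].
  have [A0 maxA0 _] := exists_maximal_max (independent0 e).
  have WC : well_covered e.
    by move=> A1 A2 /cardA h1 /cardA h2; apply: (@addnI r); rewrite h1 h2.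
  have WB : well_bicovered e by move=> B1 B2 /cardB-> /cardB->.
  do 2!split=> //; rewrite /bip_number /alpha.
  rewrite -(equimaximal_card (bipartite0 e) WB maxB0) -(cardA _ maxA0).
  by rewrite -(equimaximal_card (independent0 e) WC maxA0).
- suff cardS S : maximal_bipartite (join_rel (edgeless r) e) S -> #|S| = bip_number e.
    by move=> /cardS-> /cardS->.
  rewrite -(join_set_preim S) => /maxJ[[-> maxB] | [-> maxA]]; rewrite card_join_set.
    by rewrite cards0 (equimaximal_card (bipartite0 e) WB maxB).
  by rewrite cardsT card_ord bE (equimaximal_card (independent0 e) WC maxA).
Qed.
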